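(* Let $X,Y,Z$ be Dedekind complete Riesz spaces; all maps below are order continuous and increasing, and $f^{s}$ denotes the unique left order continuous increasing extension of $f$ to the sup-completions. (i) If $f,g:X\to Y$ satisfy $f\le g$, then $f^{s}\le g^{s}$. (ii) If $f,g,h:X\to Y$ satisfy $h=f+g$, then $h^{s}=f^{s}+g^{s}$. (iii) If $f:X\to Y$ and $g:Y\to Z$, then $(g\circ f)^{s}=g^{s}\circ f^{s}$.
   Context: For a Dedekind complete Riesz space $X$, its sup-completion $X^{s}$ is the set of classes of nonempty upward directed subsets of $X$ under $A\sim B$ iff $\sup_{a\in A}(x\wedge a)=\sup_{b\in B}(x\wedge b)$ for all $x\in X$, with induced addition, nonnegative scalar multiplication and order; $X\subseteq X^{s}$, every nonempty subset of $X^s$ has a supremum and every element is the supremum of an increasing net from $X$. A map $F$ is left order continuous if $x_\alpha\uparrow x$ implies $F(x_\alpha)\uparrow F(x)$. Every order continuous increasing map $f:X\to Y$ has a unique left order continuous increasing extension $f^s:X^s\to Y^s$. *)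

From HB Require Import structures.
From mathcomp Require Import all_boot all_order all_algebra.
From mathcomp Require Import reals.
Set Implicit Arguments. Unset Strict Implicit. Unset Printing Implicit Defensive.
Import Order.TTheory GRing.Theory Num.Theory.
Local Open Scope ring_scope.

Section OrderNotions.
Context {T : Type} (le : T -> T -> Prop).

Definition is_ub (A : T -> Prop) (s : T) : Prop := forall a, A a -> le a s.
Definition is_sup (A : T -> Prop) (s : T) : Prop :=
  is_ub A s /\ forall t, is_ub A t -> le s t.
Definition is_inf (A : T -> Prop) (s : T) : Prop :=
  (forall a, A a -> le s a) /\ forall t, (forall a, A a -> le t a) -> le t s.

Definition pair_set (x y : T) : T -> Prop := fun z => z = x \/ z = y.

Definition updirected (A : T -> Prop) : Prop :=
  (exists a, A a) /\
  forall a b, A a -> A b -> exists c, A c /\ le a c /\ le b c.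

End OrderNotions.

Definition directed_index (I : Type) (leI : I -> I -> Prop) : Prop :=
  (exists i : I, True) /\
  (forall i, leI i i) /\
  (forall i j k, leI i j -> leI j k -> leI i k) /\
  (forall i j, exists k, leI i k /\ leI j k).

Definition riesz_space (R : realType) (X : lmodType R) (le : X -> X -> Prop) : Prop :=
  (forall x, le x x) /\
  (forall x y z, le x y -> le y z -> le x z) /\
  (forall x y, le x y -> le y x -> x = y) /\
  (forall x y z, le x y -> le (x + z) (y + z)) /\
  (forall (a : R) x y, 0 <= a -> le x y -> le (a *: x) (a *: y)) /\
  (forall x y, exists s, is_sup le (pair_set x y) s).

Definition dedekind_complete_riesz (R : realType) (X : lmodType R)
    (le : X -> X -> Prop) : Prop :=
  riesz_space le /\
  forall A : X -> Prop, (exists a, A a) -> (exists u, is_ub le A u) ->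
    exists s, is_sup le A s.

(** ** The sup-completion X^s.
    An element of X^s is represented by a nonempty upward directed subset A of X
    (predicate [updirected le A]); two representatives are identified by [sc_eq]. *)
Section SupCompletion.
Context {T : Type} (le : T -> T -> Prop).

Definition meets (x : T) (A : T -> Prop) : T -> Prop :=
  fun z => exists a, A a /\ is_inf le (pair_set x a) z.

Definition sc_eq (A B : T -> Prop) : Prop :=
  forall x s, is_sup le (meets x A) s <-> is_sup le (meets x B) s.

Definition sc_le (A B : T -> Prop) : Prop :=
  forall x s t, is_sup le (meets x A) s -> is_sup le (meets x B) t -> le s t.

Definition sc_emb (x : T) : T -> Prop := fun z => z = x.

Definition sc_is_sup (I : Type) (fam : I -> T -> Prop) (S : T -> Prop) : Prop :=
  (forall i, sc_le (fam i) S) /\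
  forall U, updirected le U -> (forall i, sc_le (fam i) U) -> sc_le S U.

End SupCompletion.

Definition sc_add (R : realType) (X : lmodType R) (A B : X -> Prop) : X -> Prop :=
  fun z => exists a b, A a /\ B b /\ z = a + b.

Definition oc_increasing {X Y : Type} (leX : X -> X -> Prop) (leY : Y -> Y -> Prop)
    (f : X -> Y) : Prop :=
  (forall x y, leX x y -> leY (f x) (f y)) /\
  (forall (I : Type) (leI : I -> I -> Prop) (net : I -> X) (x : X),
      directed_index leI ->
      (forall i j, leI i j -> leX (net i) (net j)) ->
      is_sup leX (fun z => exists i, z = net i) x ->
      is_sup leY (fun z => exists i, z = f (net i)) (f x)) /\
  (forall (I : Type) (leI : I -> I -> Prop) (net : I -> X) (x : X),
      directed_index leI ->
      (forall i j, leI i j -> leX (net j) (net i)) ->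
      is_inf leX (fun z => exists i, z = net i) x ->
      is_inf leY (fun z => exists i, z = f (net i)) (f x)).

Definition sc_extension {X Y : Type} (leX : X -> X -> Prop) (leY : Y -> Y -> Prop)
    (f : X -> Y) (F : (X -> Prop) -> (Y -> Prop)) : Prop :=
  [/\
      (forall A, updirected leX A -> updirected leY (F A)),
      (forall A B, updirected leX A -> updirected leX B ->
         sc_eq leX A B -> sc_eq leY (F A) (F B)),
      (forall x, sc_eq leY (F (sc_emb x)) (sc_emb (f x))),
      (forall A B, updirected leX A -> updirected leX B ->
         sc_le leX A B -> sc_le leY (F A) (F B))
    &
      (forall (I : Type) (leI : I -> I -> Prop) (net : I -> X -> Prop) (S : X -> Prop),
         directed_index leI ->
         (forall i, updirected leX (net i)) -> updirected leX S ->
         (forall i j, leI i j -> sc_le leX (net i) (net j)) ->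
         sc_is_sup leX net S ->
         (forall i j, leI i j -> sc_le leY (F (net i)) (F (net j))) /\
         sc_is_sup leY (fun i => F (net i)) (F S))].

(* By left order continuity, f^s sends the class of a directed set A to the
   supremum of the f^s-images of the singletons a in A, i.e. f^s [A] = [f A]
   with f A the (directed) direct image. The three statements then reduce to
   comparisons of direct images in X^s: f <= g pointwise gives [f A] <= [g A];
   for h = f + g, directedness of A gives [h A] = [f A] + [g A]; and
   g (f A) = (g o f) A. *)
From mathcomp Require Import all_boot all_order all_algebra.
From mathcomp Require Import reals.
Import Order.TTheory GRing.Theory Num.Theory.
Local Open Scope ring_scope.
Set Implicit Arguments. Unset Strict Implicit.

Definition img {X Y : Type} (f : X -> Y) (A : X -> Prop) : Y -> Prop :=
  fun y => exists a, A a /\ y = f a.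

Lemma updirected_ex (T : Type) (le : T -> T -> Prop) A :
  updirected le A -> exists a, A a.
Proof. by case. Qed.

Lemma img_ex (X Y : Type) (f : X -> Y) A : (exists a, A a) -> exists y, img f A y.
Proof. by move=> [a Aa]; exists (f a), a. Qed.

Lemma img_updirected (X Y : Type) (leX : X -> X -> Prop) (leY : Y -> Y -> Prop)
    (f : X -> Y) A :
  (forall x y, leX x y -> leY (f x) (f y)) ->
  updirected leX A -> updirected leY (img f A).
Proof.
move=> fmono [[a0 Aa0] dirA]; split; first by exists (f a0), a0.
move=> _ _ [a [Aa ->]] [b [Ab ->]].
have [c [Ac [ac bc]]] := dirA a b Aa Ab.
by exists (f c); split; [exists c | split; apply: fmono].
Qed.

Lemma sc_add_ex (R : realType) (T : lmodType R) (A B : T -> Prop) :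
  (exists a, A a) -> (exists b, B b) -> exists c, sc_add A B c.
Proof. by move=> [a Aa] [b Bb]; exists (a + b), a, b. Qed.

Section SupCompletionOrder.
Variables (T : Type) (le : T -> T -> Prop).

Lemma sc_eq_sym A B : sc_eq le A B -> sc_eq le B A.
Proof. by move=> AB x s; split=> /AB. Qed.

Lemma sc_eq_trans A B C : sc_eq le A B -> sc_eq le B C -> sc_eq le A C.
Proof. by move=> AB BC x s; rewrite AB BC. Qed.

Lemma sc_eq_le_trans A B C : sc_eq le A B -> sc_le le B C -> sc_le le A C.
Proof. by move=> AB BC x s t /AB; apply: BC. Qed.

Lemma sc_le_eq_trans A B C : sc_le le A B -> sc_eq le B C -> sc_le le A C.
Proof. by move=> AB BC x s t hs /BC; apply: AB. Qed.

Lemma is_sup_equiv A B s : (forall z, A z <-> B z) -> is_sup le A s -> is_sup le B s.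
Proof.
move=> AB [ubs les]; split=> [z /AB|t ubt]; first exact: ubs.
by apply: les => z /AB; exact: ubt.
Qed.

Lemma sc_eq_ext A B : (forall z, A z <-> B z) -> sc_eq le A B.
Proof.
move=> AB x s.
have meetsAB z : meets le x A z <-> meets le x B z.
  by split=> -[a [Aa hz]]; exists a; split=> //; apply/AB.
by split; apply: is_sup_equiv => z; rewrite meetsAB.
Qed.

End SupCompletionOrder.

Section RieszSpace.
Variables (R : realType) (T : lmodType R) (le : T -> T -> Prop).
Hypothesis HT : dedekind_complete_riesz le.

Lemma rle_refl x : le x x.
Proof. by case: HT => [[? _] _]. Qed.

Lemma rle_trans x y z : le x y -> le y z -> le x z.
Proof. by case: HT => [[_ [? _]] _]; eauto. Qed.

Lemma rle_anti x y : le x y -> le y x -> x = y.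
Proof. by case: HT => [[_ [_ [? _]]] _]; eauto. Qed.

Lemma rleD2r z x y : le x y -> le (x + z) (y + z).
Proof. by case: HT => [[_ [_ [_ [? _]]]] _]; eauto. Qed.

Lemma rleD2rE z x y : le (x + z) (y + z) <-> le x y.
Proof. by split=> [/(rleD2r (- z))|]; [rewrite !addrK | exact: rleD2r]. Qed.

Lemma rleD2l z x y : le x y -> le (z + x) (z + y).
Proof. by move=> /(rleD2r z); rewrite ![_ + z]addrC. Qed.

Lemma rleD a b c d : le a b -> le c d -> le (a + c) (b + d).
Proof.
move=> ab cd; apply: (rle_trans (y := b + c)); last exact: rleD2l.
exact: rleD2r.
Qed.

Lemma rleBrDr x y z : le x (y - z) <-> le (x + z) y.
Proof. by rewrite -(rleD2rE z) subrK. Qed.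

Lemma rleBlDr x y z : le (x - z) y <-> le x (y + z).
Proof. by rewrite -(rleD2rE z) subrK. Qed.

Lemma sup_exists A :
  (exists a, A a) -> (exists u, is_ub le A u) -> exists s, is_sup le A s.
Proof. by case: HT => _; apply. Qed.

Lemma sup2_exists x y : exists s, is_sup le (pair_set x y) s.
Proof. by case: HT => [[_ [_ [_ [_ [_ ?]]]]] _]. Qed.

Lemma is_ub_pair x y t : is_ub le (pair_set x y) t <-> le x t /\ le y t.
Proof.
split; first by move=> ub; split; apply: ub; [left|right].
by case=> xt yt z [->|->].
Qed.

Lemma is_inf_pairP x y m : is_inf le (pair_set x y) m <->
  [/\ le m x, le m y & forall w, le w x -> le w y -> le w m].
Proof.
split.
  case=> lb glb; split; [by apply: lb; left | by apply: lb; right |].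
  by move=> w wx wy; apply: glb => z [->|->].
case=> mx my glb; split; first by move=> z [->|->].
by move=> t lbt; apply: glb; apply: lbt; [left|right].
Qed.

Lemma is_sup_uniq A s t : is_sup le A s -> is_sup le A t -> s = t.
Proof. by case=> ubs les [ubt lest]; apply: rle_anti; [apply: les|apply: lest]. Qed.

Lemma is_inf_uniq A s t : is_inf le A s -> is_inf le A t -> s = t.
Proof. by case=> lbs ges [lbt get]; apply: rle_anti; [apply: get|apply: ges]. Qed.

Lemma is_inf_le1 x y m : is_inf le (pair_set x y) m -> le m x.
Proof. by case/is_inf_pairP. Qed.

Lemma is_inf_le2 x y m : is_inf le (pair_set x y) m -> le m y.
Proof. by case/is_inf_pairP. Qed.

Lemma is_inf_glb x y m w : is_inf le (pair_set x y) m -> le w x -> le w y -> le w m.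
Proof. by case/is_inf_pairP => _ _; apply. Qed.

Lemma is_inf_pair_sub x y j :
  is_sup le (pair_set x y) j -> is_inf le (pair_set x y) (x + y - j).
Proof.
case=> /is_ub_pair [xj yj] lej; apply/is_inf_pairP; split.
- by apply/rleBlDr; apply: rleD2l.
- by apply/rleBlDr; rewrite [y + j]addrC; apply: rleD2r.
- move=> w wx wy; apply/rleBrDr; rewrite addrC; apply/rleBrDr.
  apply: lej; apply/is_ub_pair; split; apply/rleBrDr.
  + exact: rleD2l.
  + by rewrite addrC; apply: rleD2r.
Qed.

Lemma inf2_exists x y : exists m, is_inf le (pair_set x y) m.
Proof. by have [j hj] := sup2_exists x y; exists (x + y - j); exact: is_inf_pair_sub. Qed.

(* x /\ sup S = sup_(a in S) (x /\ a), via x /\ y = x + y - (x \/ y). *)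
Lemma is_sup_meets S s x m : is_sup le S s -> is_inf le (pair_set x s) m ->
  is_sup le (meets le x S) m.
Proof.
move=> [ubs les] hm; split.
  move=> z [a [Sa hz]]; apply: (is_inf_glb hm); first exact: is_inf_le1 hz.
  exact: rle_trans (is_inf_le2 hz) (ubs a Sa).
move=> t ubt; have [j hj] := sup2_exists x s.
rewrite (is_inf_uniq hm (is_inf_pair_sub hj)).
suff st : le s (t + j - x) by apply/rleBlDr; move/rleBrDr: st; rewrite addrC.
apply: les => a Sa; apply/rleBrDr.
have [ja hja] := sup2_exists x a.
have mat : le (x + a - ja) t by apply: ubt; exists a; split=> //; exact: is_inf_pair_sub.
have jaj : le ja j.
  case: hja => _; apply; apply/is_ub_pair; case: hj => /is_ub_pair [xj sj] _.
  by split=> //; apply: rle_trans (ubs a Sa) sj.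
by have := rleD mat jaj; rewrite subrK addrC.
Qed.

Lemma meets_sup_exists x A : (exists a, A a) -> exists s, is_sup le (meets le x A) s.
Proof.
move=> [a Aa]; apply: sup_exists.
  by have [m hm] := inf2_exists x a; exists m, a.
by exists x => z [b [_ hz]]; exact: is_inf_le1 hz.
Qed.

Lemma is_sup_meets_emb x a m :
  is_inf le (pair_set x a) m -> is_sup le (meets le x (sc_emb a)) m.
Proof.
move=> hm; split; last by move=> t; apply; exists a.
by move=> w [b [-> hw]]; rewrite (is_inf_uniq hw hm); exact: rle_refl.
Qed.

Lemma sc_le_elems D U : (forall d, D d -> sc_le le (sc_emb d) U) -> sc_le le D U.
Proof.
move=> DU x s t [_ les] ht; apply: les => z [a [Da hz]].
exact: DU a Da x z t (is_sup_meets_emb hz) ht.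
Qed.

Lemma sc_le_emb_elem D d : D d -> sc_le le (sc_emb d) D.
Proof.
move=> Dd x s t hs [ubt _]; have [m hm] := inf2_exists x d.
by rewrite (is_sup_uniq hs (is_sup_meets_emb hm)); apply: ubt; exists d.
Qed.

Lemma sc_le_trans A B C :
  (exists b, B b) -> sc_le le A B -> sc_le le B C -> sc_le le A C.
Proof.
move=> neB AB BC x s u hs hu; have [t ht] := meets_sup_exists x neB.
exact: rle_trans (AB x s t hs ht) (BC x t u ht hu).
Qed.

Lemma sc_eq_le A B : sc_eq le A B -> sc_le le A B.
Proof. by move=> AB x s t /AB hs ht; rewrite (is_sup_uniq hs ht); exact: rle_refl. Qed.

Lemma sc_le_anti A B : (exists a, A a) -> (exists b, B b) ->
  sc_le le A B -> sc_le le B A -> sc_eq le A B.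
Proof.
have anti C D s : (exists c, C c) -> sc_le le C D -> sc_le le D C ->
    forall x, is_sup le (meets le x D) s -> is_sup le (meets le x C) s.
  move=> neC CD DC x hs; have [t ht] := meets_sup_exists x neC.
  by rewrite (rle_anti (DC x s t hs ht) (CD x t s ht hs)).
by move=> neA neB AB BA x s; split; apply: anti.
Qed.

Lemma sc_le_embP d U :
  (exists u, U u) -> sc_le le (sc_emb d) U <-> is_sup le (meets le d U) d.
Proof.
move=> neU; split=> [dU|hd].
  have [t ht] := meets_sup_exists d neU.
  have hdd : is_inf le (pair_set d d) d by apply/is_inf_pairP; split=> //; exact: rle_refl.
  have dt := dU d d t (is_sup_meets_emb hdd) ht.
  suff td : le t d by rewrite -(rle_anti dt td) in ht.
  by case: ht => _; apply => z [u [_ hz]]; exact: is_inf_le1 hz.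
move=> x s t hs [ubt _]; have [m hm] := inf2_exists x d.
rewrite (is_sup_uniq hs (is_sup_meets_emb hm)).
case: (is_sup_meets hd hm) => _; apply => z [w [[u [Uu hw]] hz]].
have [mu hmu] := inf2_exists x u.
apply: rle_trans (ubt mu _); last by exists u.
apply: (is_inf_glb hmu); first exact: is_inf_le1 hz.
exact: rle_trans (is_inf_le2 hz) (is_inf_le2 hw).
Qed.

Lemma sc_le_emb y1 y2 : le y1 y2 -> sc_le le (sc_emb y1) (sc_emb y2).
Proof.
move=> y12; apply/(sc_le_embP _ (ex_intro _ y2 erefl)); apply: is_sup_meets_emb.
by apply/is_inf_pairP; split=> //; exact: rle_refl.
Qed.

Lemma is_sup_meets_add d1 d2 U1 U2 :
  is_sup le (meets le d1 U1) d1 -> is_sup le (meets le d2 U2) d2 ->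
  is_sup le (meets le (d1 + d2) (sc_add U1 U2)) (d1 + d2).
Proof.
move=> [_ le1] [_ le2]; split; first by move=> z [u [_ hz]]; exact: is_inf_le1 hz.
move=> t ubt; apply/rleBrDr/le1 => z1 [u1 [U1u1 hz1]].
apply/rleBrDr; rewrite addrC; apply/rleBrDr/le2 => z2 [u2 [U2u2 hz2]].
apply/rleBrDr; rewrite addrC.
have [m hm] := inf2_exists (d1 + d2) (u1 + u2).
apply: rle_trans (ubt m _); last by exists (u1 + u2); split=> //; exists u1, u2.
apply: (is_inf_glb hm); apply: rleD.
- exact: is_inf_le1 hz1.
- exact: is_inf_le1 hz2.
- exact: is_inf_le2 hz1.
- exact: is_inf_le2 hz2.
Qed.

Lemma sc_le_add U1 U2 V1 V2 :
  (exists u, U1 u) -> (exists u, U2 u) -> (exists v, V1 v) -> (exists v, V2 v) ->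
  sc_le le U1 V1 -> sc_le le U2 V2 -> sc_le le (sc_add U1 U2) (sc_add V1 V2).
Proof.
move=> neU1 neU2 neV1 neV2 UV1 UV2; apply: sc_le_elems => _ [u1 [u2 [U1u1 [U2u2 ->]]]].
apply/(sc_le_embP _ (sc_add_ex neV1 neV2)); apply: is_sup_meets_add.
  by apply/(sc_le_embP _ neV1); apply: sc_le_trans neU1 (sc_le_emb_elem U1u1) UV1.
by apply/(sc_le_embP _ neV2); apply: sc_le_trans neU2 (sc_le_emb_elem U2u2) UV2.
Qed.

Lemma sc_eq_add U1 U2 V1 V2 :
  (exists u, U1 u) -> (exists u, U2 u) -> (exists v, V1 v) -> (exists v, V2 v) ->
  sc_eq le U1 V1 -> sc_eq le U2 V2 -> sc_eq le (sc_add U1 U2) (sc_add V1 V2).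
Proof.
move=> neU1 neU2 neV1 neV2 UV1 UV2.
apply: sc_le_anti; [exact: sc_add_ex | exact: sc_add_ex | |];
  apply: sc_le_add => //; apply: sc_eq_le => //; exact: sc_eq_sym.
Qed.

Lemma updirected_emb x : updirected le (sc_emb x).
Proof. by split=> [|a b -> ->]; exists x; split=> //; split; exact: rle_refl. Qed.

Lemma directed_index_elems A :
  updirected le A -> directed_index (fun i j : {a | A a} => le (sval i) (sval j)).
Proof.
move=> [[a Aa] dirA]; split; first by exists (exist _ a Aa).
split; first by move=> i; exact: rle_refl.
split; first by move=> i j k; exact: rle_trans.
move=> [b Ab] [c Ac]; have [d [Ad [bd cd]]] := dirA b c Ab Ac.
by exists (exist _ d Ad).
Qed.

Lemma sc_is_sup_elems A : sc_is_sup le (fun i : {a | A a} => sc_emb (sval i)) A.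
Proof.
split; first by move=> [a Aa]; exact: sc_le_emb_elem.
by move=> U _ AU; apply: sc_le_elems => a Aa; exact: AU (exist _ a Aa).
Qed.

End RieszSpace.

Section DirectImages.
Variables (R : realType) (X Y : lmodType R).
Variables (leX : X -> X -> Prop) (leY : Y -> Y -> Prop).
Hypothesis HY : dedekind_complete_riesz leY.

Lemma sc_le_img (f g : X -> Y) A :
  (forall x, leY (f x) (g x)) -> sc_le leY (img f A) (img g A).
Proof.
move=> fg; apply: (sc_le_elems HY) => _ [a [Aa ->]].
apply: (sc_le_trans HY (ex_intro _ (g a) erefl) (sc_le_emb HY (fg a))).
by apply: (sc_le_emb_elem HY); exists a.
Qed.

Lemma sc_eq_img_add (f g : X -> Y) A :
  (forall x y, leX x y -> leY (f x) (f y)) -> (forall x y, leX x y -> leY (g x) (g y)) ->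
  updirected leX A ->
  sc_eq leY (img (fun x => f x + g x) A) (sc_add (img f A) (img g A)).
Proof.
move=> fmono gmono dirA; have neA := updirected_ex dirA.
apply: (sc_le_anti HY (img_ex _ neA) (sc_add_ex (img_ex _ neA) (img_ex _ neA))).
  apply: (sc_le_elems HY) => _ [a [Aa ->]]; apply: (sc_le_emb_elem HY).
  by exists (f a), (g a); split; [exists a | split; [exists a|]].
apply: (sc_le_elems HY) => _ [_ [_ [[a [Aa ->]] [[b [Ab ->]] ->]]]].
case: dirA => _ dirA; have [c [Ac [ac bc]]] := dirA a b Aa Ab.
have abc : leY (f a + g b) (f c + g c) by apply: (rleD HY); [apply: fmono|apply: gmono].
apply: (sc_le_trans HY (ex_intro _ _ erefl) (sc_le_emb HY abc)).
by apply: (sc_le_emb_elem HY); exists c.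
Qed.

End DirectImages.

Section ExtensionOnDirectImages.
Variables (R : realType) (X Y : lmodType R).
Variables (leX : X -> X -> Prop) (leY : Y -> Y -> Prop).
Hypotheses (HX : dedekind_complete_riesz leX) (HY : dedekind_complete_riesz leY).
Variables (f : X -> Y) (F : (X -> Prop) -> (Y -> Prop)).
Hypotheses (fmono : forall x y, leX x y -> leY (f x) (f y))
  (Fext : sc_extension leX leY f F).

Lemma sc_extension_img A : updirected leX A -> sc_eq leY (F A) (img f A).
Proof.
move=> dirA; case: (Fext) => Fdir _ Femb _ Fcont.
have [_ [Fub Flub]] := Fcont _ _ _ A (directed_index_elems HX dirA)
  (fun i => updirected_emb HX (sval i)) dirA
  (fun i j => sc_le_emb HX (y1 := sval i) (y2 := sval j)) (sc_is_sup_elems HX A).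
apply: (sc_le_anti HY (updirected_ex (Fdir _ dirA)) (img_ex _ (updirected_ex dirA))).
  apply: (Flub _ (img_updirected fmono dirA)) => -[a Aa] /=.
  by apply: sc_eq_le_trans (Femb a) _; apply: (sc_le_emb_elem HY); exists a.
apply: (sc_le_elems HY) => _ [a [Aa ->]].
exact: sc_eq_le_trans (sc_eq_sym (Femb a)) (Fub (exist _ a Aa)).
Qed.

End ExtensionOnDirectImages.

Lemma sc_extension_le (R : realType) (X Y : lmodType R)
    (leX : X -> X -> Prop) (leY : Y -> Y -> Prop) (f g : X -> Y)
    (F G : (X -> Prop) -> (Y -> Prop)) :
  dedekind_complete_riesz leX -> dedekind_complete_riesz leY ->
  (forall x y, leX x y -> leY (f x) (f y)) -> (forall x y, leX x y -> leY (g x) (g y)) ->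
  sc_extension leX leY f F -> sc_extension leX leY g G ->
  (forall x, leY (f x) (g x)) ->
  forall A, updirected leX A -> sc_le leY (F A) (G A).
Proof.
move=> HX HY fmono gmono Fext Gext fg A dirA.
apply: sc_eq_le_trans (sc_extension_img HX HY fmono Fext dirA) _.
apply: sc_le_eq_trans (sc_le_img HY fg) _.
exact: sc_eq_sym (sc_extension_img HX HY gmono Gext dirA).
Qed.

Lemma sc_extension_add (R : realType) (X Y : lmodType R)
    (leX : X -> X -> Prop) (leY : Y -> Y -> Prop) (f g h : X -> Y)
    (F G H : (X -> Prop) -> (Y -> Prop)) :
  dedekind_complete_riesz leX -> dedekind_complete_riesz leY ->
  (forall x y, leX x y -> leY (f x) (f y)) -> (forall x y, leX x y -> leY (g x) (g y)) ->
  sc_extension leX leY f F -> sc_extension leX leY g G -> sc_extension leX leY h H ->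
  (forall x, h x = f x + g x) ->
  forall A, updirected leX A -> sc_eq leY (H A) (sc_add (F A) (G A)).
Proof.
move=> HX HY fmono gmono Fext Gext Hext hfg A dirA.
have hmono x y : leX x y -> leY (h x) (h y).
  by move=> xy; rewrite !hfg; apply: (rleD HY); [apply: fmono|apply: gmono].
have FA := sc_extension_img HX HY fmono Fext dirA.
have GA := sc_extension_img HX HY gmono Gext dirA.
have neA := updirected_ex dirA.
have neF : exists y, F A y by case: Fext => Fdir _ _ _ _; exact: updirected_ex (Fdir _ dirA).
have neG : exists y, G A y by case: Gext => Gdir _ _ _ _; exact: updirected_ex (Gdir _ dirA).
have hA : sc_eq leY (img h A) (img (fun x => f x + g x) A).
  by apply: sc_eq_ext => z; split=> -[a [Aa ->]]; exists a; rewrite hfg.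
apply: sc_eq_trans (sc_extension_img HX HY hmono Hext dirA) _.
apply: sc_eq_trans hA _.
apply: sc_eq_trans (sc_eq_img_add HY fmono gmono dirA) _.
by apply: (sc_eq_add HY) (sc_eq_sym FA) (sc_eq_sym GA) => //; exact: img_ex.
Qed.

Lemma sc_extension_comp (R : realType) (X Y Z : lmodType R)
    (leX : X -> X -> Prop) (leY : Y -> Y -> Prop) (leZ : Z -> Z -> Prop)
    (f : X -> Y) (g : Y -> Z) (F : (X -> Prop) -> (Y -> Prop))
    (G : (Y -> Prop) -> (Z -> Prop)) (H : (X -> Prop) -> (Z -> Prop)) :
  dedekind_complete_riesz leX -> dedekind_complete_riesz leY ->
  dedekind_complete_riesz leZ ->
  (forall x y, leX x y -> leY (f x) (f y)) -> (forall x y, leY x y -> leZ (g x) (g y)) ->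
  sc_extension leX leY f F -> sc_extension leY leZ g G ->
  sc_extension leX leZ (fun x => g (f x)) H ->
  forall A, updirected leX A -> sc_eq leZ (H A) (G (F A)).
Proof.
move=> HX HY HZ fmono gmono Fext Gext Hext A dirA.
have gfmono x y : leX x y -> leZ (g (f x)) (g (f y)) by move=> /fmono /gmono.
have dirFA : updirected leY (F A) by case: Fext => Fdir _ _ _ _; exact: Fdir.
have dirfA := img_updirected fmono dirA.
have [_ Gwd _ _ _] := Gext.
apply: sc_eq_trans (sc_extension_img HX HZ gfmono Hext dirA) _.
apply: sc_eq_trans (sc_eq_sym (Gwd _ _ dirFA dirfA (sc_extension_img HX HY fmono Fext dirA))).
apply: sc_eq_trans (sc_eq_sym (sc_extension_img HY HZ gmono Gext dirfA)).
apply: sc_eq_ext => z; split=> [[a [Aa ->]] | [_ [[a [Aa ->]] ->]]]; last by exists a.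
by exists (f a); split=> //; exists a.
Qed.

Theorem propositionP3 (R : realType) (X Y Z : lmodType R)
    (leX : X -> X -> Prop) (leY : Y -> Y -> Prop) (leZ : Z -> Z -> Prop) :
  dedekind_complete_riesz leX -> dedekind_complete_riesz leY ->
  dedekind_complete_riesz leZ ->
  (* (i) monotonicity of f |-> f^s *)
  (forall (f g : X -> Y) (F G : (X -> Prop) -> (Y -> Prop)),
     oc_increasing leX leY f -> oc_increasing leX leY g ->
     sc_extension leX leY f F -> sc_extension leX leY g G ->
     (forall x, leY (f x) (g x)) ->
     forall A, updirected leX A -> sc_le leY (F A) (G A)) /\
  (* (ii) additivity: (f + g)^s = f^s + g^s *)
  (forall (f g h : X -> Y) (F G H : (X -> Prop) -> (Y -> Prop)),
     oc_increasing leX leY f -> oc_increasing leX leY g -> oc_increasing leX leY h ->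
     sc_extension leX leY f F -> sc_extension leX leY g G ->
     sc_extension leX leY h H ->
     (forall x, h x = f x + g x) ->
     forall A, updirected leX A -> sc_eq leY (H A) (sc_add (F A) (G A))) /\
  (* (iii) functoriality: (g o f)^s = g^s o f^s *)
  (forall (f : X -> Y) (g : Y -> Z) (F : (X -> Prop) -> (Y -> Prop))
          (G : (Y -> Prop) -> (Z -> Prop)) (H : (X -> Prop) -> (Z -> Prop)),
     oc_increasing leX leY f -> oc_increasing leY leZ g ->
     sc_extension leX leY f F -> sc_extension leY leZ g G ->
     sc_extension leX leZ (fun x => g (f x)) H ->
     forall A, updirected leX A -> sc_eq leZ (H A) (G (F A))).
Proof.
move=> HX HY HZ; split; [|split].
- move=> f g F G [fmono _] [gmono _]; exact: sc_extension_le HX HY fmono gmono.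
- move=> f g h F G H [fmono _] [gmono _] _; exact: sc_extension_add HX HY fmono gmono.
- move=> f g F G H [fmono _] [gmono _]; exact: sc_extension_comp HX HY HZ fmono gmono.
Qed.
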